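(* Let $X=c_0(\mathbb N)$ or $X=\ell^p(\mathbb N)$ with $1\le p<\infty$, let $\lambda=(\lambda_k)_{k\in\mathbb N}\in\ell^\infty(\mathbb N)$, and define $T_\lambda:X\to X$ by $T_\lambda(x_1,x_2,\ldots)=(\lambda_1x_1,\lambda_2x_2,\ldots)$. (A) The following are equivalent: (i) $T_\lambda$ is recurrent; (ii) $T_\lambda$ is rigid; (iii) $|\lambda_k|=1$ for every $k\in\mathbb N$. (B) The following are equivalent: (i) $T_\lambda$ is uniformly rigid; (ii) there is a sequence $(\theta_k)_{k\in\mathbb N}\subset\mathbb R$ with $\lambda_k=e^{2\pi i\theta_k}$ for every $k$ and $\liminf_{n\to\infty}\sup_{k\in\mathbb N}|e^{2\pi in\theta_k}-1|=0$.
   Context: An operator $T$ on a Banach space $X$ is recurrent if for every non-empty open $U\subset X$ there is a positive integer $k$ with $U\cap T^{-k}(U)\neq\emptyset$; rigid if there is an increasing sequence of positive integers $(k_n)$ with $T^{k_n}x\to x$ for all $x\in X$; uniformly rigid if there is an increasing sequence of positive integers $(k_n)$ with $\|T^{k_n}-I\|\to0$. *)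

From Stdlib Require Import Reals.
From Coquelicot Require Import Coquelicot.
Open Scope R_scope.

(* r ^ p for r >= 0, with the convention 0 ^ p = 0 (p > 0). *)
Definition rpow (r p : R) : R := if Rle_dec r 0 then 0 else Rpower r p.

Inductive seqspace := c0 | lp (p : R).

Definition valid_space (X : seqspace) : Prop :=
  match X with c0 => True | lp p => 1 <= p end.

Definition seq := nat -> C.

Definition inX (X : seqspace) (x : seq) : Prop :=
  match X with
  | c0 => is_lim_seq (fun k => Cmod (x k)) 0
  | lp p => ex_series (fun k => rpow (Cmod (x k)) p)
  end.

Definition sup (E : R -> Prop) : R := real (Lub_Rbar E).

Definition normX (X : seqspace) (x : seq) : R :=
  match X with
  | c0 => sup (fun r => exists k, r = Cmod (x k))
  | lp p => rpow (Series (fun k => rpow (Cmod (x k)) p)) (1 / p)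
  end.

Definition seq_sub (x y : seq) : seq := fun k => Cminus (x k) (y k).

Definition bounded_seq (lam : seq) : Prop :=
  exists M, forall k, Cmod (lam k) <= M.

Definition Tlam (lam : seq) (x : seq) : seq := fun k => Cmult (lam k) (x k).
Definition Tpow (lam : seq) (n : nat) (x : seq) : seq := Nat.iter n (Tlam lam) x.

(* open subsets of X (U is only relevant on elements of X) *)
Definition openX (X : seqspace) (U : seq -> Prop) : Prop :=
  forall x, inX X x -> U x ->
    exists eps, 0 < eps /\ forall y, inX X y -> normX X (seq_sub y x) < eps -> U y.

Definition recurrent (X : seqspace) (lam : seq) : Prop :=
  forall U : seq -> Prop, openX X U -> (exists x, inX X x /\ U x) ->
    exists k : nat, (0 < k)%nat /\
      exists x, inX X x /\ U x /\ U (Tpow lam k x).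

Definition incr_pos (ks : nat -> nat) : Prop :=
  (0 < ks 0)%nat /\ forall n, (ks n < ks (S n))%nat.

Definition rigid (X : seqspace) (lam : seq) : Prop :=
  exists ks, incr_pos ks /\
    forall x, inX X x ->
      is_lim_seq (fun n => normX X (seq_sub (Tpow lam (ks n) x) x)) 0.

Definition opnorm (X : seqspace) (A : seq -> seq) : R :=
  sup (fun r => exists x, inX X x /\ normX X x <= 1 /\ r = normX X (A x)).

Definition unif_rigid (X : seqspace) (lam : seq) : Prop :=
  exists ks, incr_pos ks /\
    is_lim_seq (fun n => opnorm X (fun x => seq_sub (Tpow lam (ks n) x) x)) 0.

Definition cexp_i (t : R) : C := (cos t, sin t).

From Stdlib Require Import Reals Lra Lia Arith ZArith Classical ClassicalEpsilon FunctionalExtensionality.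
From Coquelicot Require Import Coquelicot.
Open Scope R_scope.

(* A diagonal operator acts coordinatewise: [T_lam^n - I] is the diagonal operator with
   multipliers [lam_k^n - 1], whose operator norm is [sup_k |lam_k^n - 1|].  A return of a
   point close to the unit vector [e_k] makes [|lam_k^n - 1|] small for some [n > 0], and
   [|lam_k^n - 1| >= ||lam_k| - 1|], so recurrence forces [|lam_k| = 1].  Conversely, if all
   [|lam_k| = 1], simultaneous Dirichlet approximation (pigeonhole on the torus) gives [n_j]
   with [|lam_k^(n_j) - 1| < 1/(j+1)] for all [k <= j]; these multipliers are bounded by 2
   and every [x] in [c_0] or [l^p] has small tails, so [T^(n_j) x -> x].  Uniform rigidity
   says that a subsequence of [sup_k |lam_k^n - 1|] tends to 0, i.e. its lim inf is 0. *)

Lemma sup_le (E : R -> Prop) b : (exists r, E r) -> (forall r, E r -> r <= b) -> sup E <= b.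
Proof.
  intros [r0 Hr0] Hb. unfold sup.
  destruct (Lub_Rbar_correct E) as [Hub Hlub].
  assert (Hlow := Hub r0 Hr0).
  assert (Hup : Rbar_le (Lub_Rbar E) b) by (apply Hlub; intros x Hx; apply Hb, Hx).
  destruct (Lub_Rbar E); simpl in *; easy.
Qed.

Lemma le_sup (E : R -> Prop) b r : (forall r, E r -> r <= b) -> E r -> r <= sup E.
Proof.
  intros Hb Hr. unfold sup.
  destruct (Lub_Rbar_correct E) as [Hub Hlub].
  assert (Hlow := Hub r Hr).
  assert (Hup : Rbar_le (Lub_Rbar E) b) by (apply Hlub; intros x Hx; apply Hb, Hx).
  destruct (Lub_Rbar E); simpl in *; easy.
Qed.

Lemma is_lim_seq_inv_S : is_lim_seq (fun n => / INR (S n)) 0.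
Proof.
  change (Finite 0) with (Rbar_inv p_infty).
  apply is_lim_seq_inv; [|discriminate].
  apply (is_lim_seq_incr_1 INR), is_lim_seq_INR.
Qed.

Lemma inv_S_pos n : 0 < / INR (S n).
Proof. apply Rinv_0_lt_compat, lt_0_INR; lia. Qed.

Lemma pow_sub1_ge r k : 0 <= r -> (0 < k)%nat -> Rabs (r - 1) <= Rabs (r ^ k - 1).
Proof.
  intros Hr Hk. destruct k as [|k]; [lia|]. simpl.
  destruct (Rle_lt_dec r 1) as [Hr1|Hr1].
  - assert (r ^ k <= 1) by (rewrite <- (pow1 k); apply pow_incr; lra).
    assert (0 <= r ^ k) by (apply pow_le; lra).
    rewrite !Rabs_left1; nra.
  - assert (1 <= r ^ k) by (apply pow_R1_Rle; lra).
    rewrite !Rabs_pos_eq; nra.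
Qed.

Lemma Cmod_rev (a b : C) : Rabs (Cmod a - Cmod b) <= Cmod (a - b)%C.
Proof.
  assert (Ea : Cmod a <= Cmod (a - b)%C + Cmod b).
  { replace a with ((a - b) + b)%C at 1 by ring. apply Cmod_triangle. }
  assert (Eb : Cmod b <= Cmod (a - b)%C + Cmod a).
  { replace b with (- (a - b) + a)%C at 1 by ring.
    rewrite <- (Cmod_opp (a - b)). apply Cmod_triangle. }
  apply Rabs_le. lra.
Qed.

Lemma Cmod_sub_le (a b : C) : Cmod (a - b)%C <= Cmod a + Cmod b.
Proof. unfold Cminus. rewrite <- (Cmod_opp b). apply Cmod_triangle. Qed.

Lemma Cmod_pow_sub1_ge (z : C) k : (0 < k)%nat -> Rabs (Cmod z - 1) <= Cmod (z ^ k - 1)%C.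
Proof.
  intros Hk. eapply Rle_trans. apply (pow_sub1_ge _ k (Cmod_ge_0 z) Hk).
  rewrite <- Cmod_pow, <- Cmod_1 at 1. apply Cmod_rev.
Qed.

Lemma rpow_nonneg r p : 0 <= rpow r p.
Proof. unfold rpow. destruct (Rle_dec r 0); [lra|]. left; apply exp_pos. Qed.

Lemma rpow_0 p : rpow 0 p = 0.
Proof. unfold rpow. destruct (Rle_dec 0 0); lra. Qed.

Lemma rpow_1 p : rpow 1 p = 1.
Proof. unfold rpow. destruct (Rle_dec 1 0); [lra|]. unfold Rpower. rewrite ln_1, Rmult_0_r. apply exp_0. Qed.

Lemma rpow_le a b p : 0 <= a <= b -> 0 <= p -> rpow a p <= rpow b p.
Proof.
  intros Hab Hp. unfold rpow.
  destruct (Rle_dec a 0), (Rle_dec b 0); try lra.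
  - left; apply exp_pos.
  - apply Rle_Rpower_l; lra.
Qed.

Lemma rpow_lt a b p : 0 <= a < b -> 0 < p -> rpow a p < rpow b p.
Proof.
  intros Hab Hp. unfold rpow.
  destruct (Rle_dec a 0), (Rle_dec b 0); try lra.
  - apply exp_pos.
  - apply Rlt_Rpower_l; lra.
Qed.

Lemma rpow_mult a b p : 0 <= a -> 0 <= b -> rpow (a * b) p = rpow a p * rpow b p.
Proof.
  intros Ha Hb. unfold rpow.
  destruct (Rle_dec a 0), (Rle_dec b 0), (Rle_dec (a * b) 0); try nra.
  rewrite Rpower_mult_distr; lra.
Qed.

Lemma rpow_rpow a p q : 0 <= a -> p * q = 1 -> rpow (rpow a p) q = a.
Proof.
  intros Ha Hpq. unfold rpow at 2. destruct (Rle_dec a 0).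
  - rewrite rpow_0. lra.
  - unfold rpow. destruct (Rle_dec (Rpower a p) 0) as [Hle|].
    + pose proof (exp_pos (p * ln a)). unfold Rpower in Hle. lra.
    + rewrite Rpower_mult, Hpq. apply Rpower_1. lra.
Qed.

Lemma is_lim_seq_rpow_0 (a : nat -> R) q : 0 < q ->
  is_lim_seq a 0 -> is_lim_seq (fun n => rpow (a n) q) 0.
Proof.
  intros Hq Ha. apply is_lim_seq_spec in Ha. apply is_lim_seq_spec. intros eps.
  pose proof (cond_pos eps) as Heps.
  assert (Hd : 0 < rpow eps (/ q)).
  { unfold rpow. destruct (Rle_dec eps 0); [lra|]. apply exp_pos. }
  destruct (Ha (mkposreal _ Hd)) as [N HN]. exists N. intros n Hn.
  specialize (HN n Hn). simpl in HN. rewrite Rminus_0_r in *.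
  rewrite Rabs_pos_eq by apply rpow_nonneg.
  destruct (Rle_dec (a n) 0) as [Hneg|Hpos].
  - unfold rpow. destruct (Rle_dec (a n) 0); lra.
  - rewrite <- (rpow_rpow eps (/ q) q) by (field_simplify; lra).
    apply rpow_lt; [|lra]. apply Rabs_lt_between in HN. lra.
Qed.

Lemma series_nonneg a : (forall n, 0 <= a n) -> ex_series a -> 0 <= Series a.
Proof.
  intros Ha Hs. replace 0 with (0 * Series a) by ring. rewrite <- Series_scal_l.
  apply Series_le; auto. intros n. specialize (Ha n). lra.
Qed.

Lemma term_le_sum (a : nat -> R) k N : (forall n, 0 <= a n) -> (k <= N)%nat ->
  a k <= sum_f_R0 a N.
Proof.
  intros Ha HkN. induction N as [|N IH].
  - replace k with 0%nat by lia. simpl. lra.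
  - simpl. destruct (Nat.eq_dec k (S N)) as [->|Hk].
    + pose proof (cond_pos_sum a N Ha). lra.
    + specialize (Ha (S N)). assert (a k <= sum_f_R0 a N) by (apply IH; lia). lra.
Qed.

Lemma sum_le_series a N : (forall n, 0 <= a n) -> ex_series a -> sum_f_R0 a N <= Series a.
Proof.
  intros Ha Hs. rewrite (Series_incr_n a (S N)) by (auto; lia). simpl pred.
  assert (0 <= Series (fun k => a (S N + k)%nat)).
  { apply series_nonneg; auto. apply ex_series_incr_n, Hs. }
  lra.
Qed.

Lemma term_le_series a k : (forall n, 0 <= a n) -> ex_series a -> a k <= Series a.
Proof.
  intros Ha Hs. eapply Rle_trans; [apply (term_le_sum a k k); auto|].
  apply sum_le_series; auto.
Qed.

Lemma is_lim_seq_Series_tail a : ex_series a ->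
  is_lim_seq (fun n => Series (fun k => a (S n + k)%nat)) 0.
Proof.
  intros Hs.
  apply (is_lim_seq_ext (fun n => Series a - sum_f_R0 a n)).
  { intros n. rewrite (Series_incr_n a (S n)) at 1 by (auto; lia). simpl pred. ring. }
  replace (Finite 0) with (Finite (Series a - Series a)) by (f_equal; ring).
  apply is_lim_seq_minus'; [apply is_lim_seq_const|].
  apply Series_correct in Hs.
  eapply is_lim_seq_ext; [intros n; apply sum_n_Reals | exact Hs].
Qed.

Lemma c0_bounded x : is_lim_seq (fun k => Cmod (x k)) 0 -> exists B, forall k, Cmod (x k) <= B.
Proof.
  intros Hx. apply is_lim_seq_spec in Hx. destruct (Hx (mkposreal 1 Rlt_0_1)) as [N HN].
  exists (1 + sum_f_R0 (fun k => Cmod (x k)) N). intros k.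
  pose proof (cond_pos_sum (fun k => Cmod (x k)) N (fun n => Cmod_ge_0 _)).
  destruct (le_lt_dec k N) as [HkN|HNk].
  - pose proof (term_le_sum (fun k => Cmod (x k)) k N (fun n => Cmod_ge_0 _) HkN). lra.
  - specialize (HN k ltac:(lia)). simpl in HN. rewrite Rminus_0_r in HN.
    rewrite Rabs_pos_eq in HN by apply Cmod_ge_0. lra.
Qed.

Lemma coord_le_normX X x j : valid_space X -> inX X x -> Cmod (x j) <= normX X x.
Proof.
  destruct X as [|p]; simpl; intros HX Hx.
  - destruct (c0_bounded x Hx) as [B HB]. apply le_sup with B.
    + intros r [k ->]. apply HB.
    + exists j. reflexivity.
  - rewrite <- (rpow_rpow (Cmod (x j)) p (1 / p)) by (apply Cmod_ge_0 || (field; lra)).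
    apply rpow_le.
    + split; [apply rpow_nonneg|].
      apply (term_le_series (fun k => rpow (Cmod (x k)) p)); auto. intros; apply rpow_nonneg.
    + unfold Rdiv. rewrite Rmult_1_l. left; apply Rinv_0_lt_compat; lra.
Qed.

Lemma normX_nonneg X x : valid_space X -> inX X x -> 0 <= normX X x.
Proof.
  intros HX Hx. eapply Rle_trans; [apply (Cmod_ge_0 (x 0%nat))|]. apply coord_le_normX; auto.
Qed.

Lemma inX_dominated X x y C : valid_space X -> 0 <= C ->
  (forall j, Cmod (y j) <= C * Cmod (x j)) -> inX X x -> inX X y.
Proof.
  intros HX HC Hyx Hx. destruct X as [|p]; simpl in *.
  - apply is_lim_seq_le_le with (fun _ => 0) (fun k => C * Cmod (x k)).
    + intros n; split; [apply Cmod_ge_0 | apply Hyx].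
    + apply is_lim_seq_const.
    + replace (Finite 0) with (Rbar_mult C 0) by (simpl; f_equal; ring).
      apply is_lim_seq_scal_l, Hx.
  - apply (ex_series_le (K := R_AbsRing) (V := R_CompleteNormedModule))
      with (fun k => rpow C p * rpow (Cmod (x k)) p).
    + intros n. unfold norm; simpl. unfold abs; simpl.
      rewrite Rabs_pos_eq by apply rpow_nonneg.
      rewrite <- rpow_mult by (auto; apply Cmod_ge_0).
      apply rpow_le; [split; [apply Cmod_ge_0 | apply Hyx] | lra].
    + apply (ex_series_scal_l (V := R_NormedModule)), Hx.
Qed.

Lemma normX_dominated X x y C : valid_space X -> 0 <= C ->
  (forall j, Cmod (y j) <= C * Cmod (x j)) -> inX X x -> normX X y <= C * normX X x.
Proof.
  intros HX HC Hyx Hx. destruct X as [|p]; simpl in *.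
  - apply sup_le; [exists (Cmod (y 0%nat)), 0%nat; reflexivity|].
    intros r [k ->]. eapply Rle_trans; [apply Hyx|].
    apply Rmult_le_compat_l; auto. apply (coord_le_normX c0); simpl; auto.
  - assert (Hp : 0 < p) by lra.
    rewrite <- (rpow_rpow C p (1 / p)) by (auto || (field; lra)).
    rewrite <- rpow_mult by (apply rpow_nonneg || (apply series_nonneg; auto; intros; apply rpow_nonneg)).
    apply rpow_le; [|unfold Rdiv; rewrite Rmult_1_l; left; apply Rinv_0_lt_compat; lra].
    split.
    + apply series_nonneg; [intros; apply rpow_nonneg|].
      apply (inX_dominated (lp p) x y C); simpl; auto.
    + rewrite <- Series_scal_l. apply Series_le.
      * intros n. split; [apply rpow_nonneg|].
        rewrite <- rpow_mult by (auto; apply Cmod_ge_0).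
        apply rpow_le; [split; [apply Cmod_ge_0 | apply Hyx] | lra].
      * apply (ex_series_scal_l (V := R_NormedModule)), Hx.
Qed.

Lemma rpow_Rmax a b p : rpow (Rmax a b) p <= rpow a p + rpow b p.
Proof.
  pose proof (rpow_nonneg a p). pose proof (rpow_nonneg b p).
  unfold Rmax. destruct (Rle_dec a b); lra.
Qed.

Lemma inX_sub X x y : valid_space X -> inX X x -> inX X y -> inX X (seq_sub y x).
Proof.
  intros HX Hx Hy. unfold seq_sub. destruct X as [|p]; simpl in *.
  - apply is_lim_seq_le_le with (fun _ => 0) (fun k => Cmod (y k) + Cmod (x k)).
    + intros n; split; [apply Cmod_ge_0 | apply Cmod_sub_le].
    + apply is_lim_seq_const.
    + replace (Finite 0) with (Finite (0 + 0)) by (f_equal; ring).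
      apply is_lim_seq_plus'; auto.
  - apply (ex_series_le (K := R_AbsRing) (V := R_CompleteNormedModule)) with
      (fun k => rpow 2 p * (rpow (Cmod (y k)) p + rpow (Cmod (x k)) p)).
    + intros n. unfold norm; simpl. unfold abs; simpl.
      rewrite Rabs_pos_eq by apply rpow_nonneg.
      set (m := Rmax (Cmod (y n)) (Cmod (x n))).
      assert (Hm : Cmod (y n) <= m /\ Cmod (x n) <= m) by (split; [apply Rmax_l | apply Rmax_r]).
      pose proof (Cmod_ge_0 (x n)).
      apply Rle_trans with (rpow (2 * m) p).
      * apply rpow_le; [|lra]. split; [apply Cmod_ge_0|].
        pose proof (Cmod_sub_le (y n) (x n)). lra.
      * rewrite rpow_mult by lra.
        apply Rmult_le_compat_l; [apply rpow_nonneg | apply rpow_Rmax].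
    + apply (ex_series_scal_l (V := R_NormedModule)).
      apply (ex_series_plus (V := R_NormedModule)); auto.
Qed.

Definition unit_seq (j : nat) : seq := fun k => if Nat.eq_dec k j then RtoC 1 else RtoC 0.

Lemma unit_seq_diag j : unit_seq j j = RtoC 1.
Proof. unfold unit_seq. destruct (Nat.eq_dec j j); congruence. Qed.

Lemma Cmod_unit_seq_off j k : (k <> j)%nat -> Cmod (unit_seq j k) = 0.
Proof. intros Hkj. unfold unit_seq. destruct (Nat.eq_dec k j); [lia | apply Cmod_0]. Qed.

Lemma is_series_zero : is_series (fun _ : nat => 0) 0.
Proof.
  change (is_lim_seq (sum_n (fun _ : nat => 0)) 0).
  apply (is_lim_seq_ext (fun _ => 0)); [|apply is_lim_seq_const].
  intros n. rewrite sum_n_const. ring.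
Qed.

Lemma is_series_unit_seq j p : is_series (fun k => rpow (Cmod (unit_seq j k)) p) 1.
Proof.
  set (a := fun k => rpow (Cmod (unit_seq j k)) p).
  assert (Hoff : forall k, k <> j -> a k = 0).
  { intros k Hk. unfold a. rewrite Cmod_unit_seq_off by exact Hk. apply rpow_0. }
  assert (Hsum : sum_n a j = 1).
  { assert (Haj : a j = 1) by (unfold a; rewrite unit_seq_diag, Cmod_1; apply rpow_1).
    destruct j as [|j].
    - rewrite sum_O. exact Haj.
    - rewrite sum_Sn, Haj, (sum_n_ext_loc a (fun _ => 0)), sum_n_const.
      + simpl. unfold plus; simpl. ring.
      + intros n Hn. apply Hoff. lia. }
  apply (is_series_decr_n a (S j)); [lia|]. simpl pred.
  match goal with |- is_series _ ?l => replace l with 0 end.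
  2:{ transitivity (1 - sum_n a j); [rewrite Hsum; ring | reflexivity]. }
  apply (is_series_ext (fun _ => 0)); [|apply is_series_zero].
  intros n. symmetry. apply Hoff. lia.
Qed.

Lemma unit_seq_inX X j : valid_space X -> inX X (unit_seq j).
Proof.
  intros HX. destruct X as [|p]; simpl.
  - apply is_lim_seq_spec. intros eps. exists (S j). intros n Hn.
    rewrite Cmod_unit_seq_off, Rminus_0_r, Rabs_R0 by lia. apply cond_pos.
  - eexists. apply is_series_unit_seq.
Qed.

Lemma unit_seq_normX X j : valid_space X -> normX X (unit_seq j) <= 1.
Proof.
  intros HX. destruct X as [|p]; simpl.
  - apply sup_le; [exists (Cmod (unit_seq j 0%nat)), 0%nat; reflexivity|].
    intros r [k ->]. destruct (Nat.eq_dec k j) as [->|Hkj].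
    + rewrite unit_seq_diag, Cmod_1. lra.
    + rewrite Cmod_unit_seq_off by exact Hkj. lra.
  - rewrite (is_series_unique _ _ (is_series_unit_seq j p)), rpow_1. lra.
Qed.

(** * Diagonal operators *)

Definition supnorm (mu : seq) : R := sup (fun r => exists k, r = Cmod (mu k)).

(* The multipliers of the diagonal operator [T_lam ^ n - I]. *)
Definition pow_sub_one (lam : seq) (n : nat) : seq := fun k => (lam k ^ n - 1)%C.

Lemma bounded_seq_nonneg (mu : seq) M : (forall k, Cmod (mu k) <= M) -> 0 <= M.
Proof. intros HM. eapply Rle_trans; [apply (Cmod_ge_0 (mu 0%nat)) | apply HM]. Qed.

Lemma le_supnorm mu k : bounded_seq mu -> Cmod (mu k) <= supnorm mu.
Proof. intros [M HM]. apply le_sup with M; [intros r [j ->]; apply HM | exists k; reflexivity]. Qed.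

Lemma supnorm_nonneg mu : bounded_seq mu -> 0 <= supnorm mu.
Proof. intros Hmu. eapply Rle_trans; [apply (Cmod_ge_0 (mu 0%nat)) | apply le_supnorm, Hmu]. Qed.

Lemma bounded_pow_sub_one lam n : bounded_seq lam -> bounded_seq (pow_sub_one lam n).
Proof.
  intros [M HM]. exists (M ^ n + 1). intros k. unfold pow_sub_one.
  eapply Rle_trans; [apply Cmod_sub_le|]. rewrite Cmod_pow, Cmod_1.
  apply Rplus_le_compat_r, pow_incr. split; [apply Cmod_ge_0 | apply HM].
Qed.

Lemma Tpow_Tlam lam n x : Tpow lam n x = Tlam (fun k => (lam k ^ n)%C) x.
Proof.
  apply functional_extensionality. intros k. unfold Tlam.
  induction n as [|n IH]; simpl.
  - rewrite Cmult_1_l. reflexivity.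
  - unfold Tpow in *. simpl. unfold Tlam at 1. rewrite IH. ring.
Qed.

Lemma Tpow_sub_id lam n x : seq_sub (Tpow lam n x) x = Tlam (pow_sub_one lam n) x.
Proof.
  rewrite Tpow_Tlam. apply functional_extensionality. intros k.
  unfold seq_sub, Tlam, pow_sub_one. ring.
Qed.

Lemma Tlam_inX X mu x : valid_space X -> bounded_seq mu -> inX X x -> inX X (Tlam mu x).
Proof.
  intros HX [M HM] Hx. apply (inX_dominated X x _ M); auto.
  - eapply bounded_seq_nonneg; eauto.
  - intros j. unfold Tlam. rewrite Cmod_mult. apply Rmult_le_compat_r; [apply Cmod_ge_0 | apply HM].
Qed.

Lemma Tpow_inX X lam n x : valid_space X -> bounded_seq lam -> inX X x -> inX X (Tpow lam n x).
Proof.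
  intros HX [M HM] Hx. rewrite Tpow_Tlam. apply Tlam_inX; auto.
  exists (M ^ n). intros k. rewrite Cmod_pow. apply pow_incr. split; [apply Cmod_ge_0 | apply HM].
Qed.

Lemma normX_Tlam_le X mu x : valid_space X -> bounded_seq mu -> inX X x ->
  normX X (Tlam mu x) <= supnorm mu * normX X x.
Proof.
  intros HX Hmu Hx. apply normX_dominated; auto; [apply supnorm_nonneg, Hmu|].
  intros j. unfold Tlam. rewrite Cmod_mult.
  apply Rmult_le_compat_r; [apply Cmod_ge_0 | apply le_supnorm, Hmu].
Qed.

Lemma opnorm_Tlam X mu : valid_space X -> bounded_seq mu -> opnorm X (Tlam mu) = supnorm mu.
Proof.
  intros HX Hmu. pose proof (supnorm_nonneg mu Hmu) as Hs.
  assert (Hbound : forall r, (exists x, inX X x /\ normX X x <= 1 /\ r = normX X (Tlam mu x)) ->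
                             r <= supnorm mu).
  { intros r [x [Hx [Hx1 ->]]]. eapply Rle_trans; [apply normX_Tlam_le; auto|].
    pose proof (normX_nonneg X x HX Hx). nra. }
  apply Rle_antisym; unfold opnorm.
  - apply sup_le; [|exact Hbound].
    exists (normX X (Tlam mu (unit_seq 0))), (unit_seq 0).
    repeat split; [apply unit_seq_inX | apply unit_seq_normX]; auto.
  - apply sup_le; [exists (Cmod (mu 0%nat)), 0%nat; reflexivity|].
    intros r [j ->].
    assert (Hej : inX X (unit_seq j)) by (apply unit_seq_inX, HX).
    apply Rle_trans with (normX X (Tlam mu (unit_seq j))).
    + replace (Cmod (mu j)) with (Cmod (Tlam mu (unit_seq j) j))
        by (unfold Tlam; rewrite unit_seq_diag, Cmod_mult, Cmod_1; ring).
      apply coord_le_normX; auto. apply Tlam_inX; auto.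
    + apply le_sup with (supnorm mu); [exact Hbound|].
      exists (unit_seq j). repeat split; auto. apply unit_seq_normX, HX.
Qed.

(** * Multipliers vanishing on longer and longer initial segments *)

Lemma Series_rpow_Tlam_le (m x : seq) p n E B : 1 <= p -> inX (lp p) x ->
  (forall j, Cmod (m j) <= B) -> (forall j, (j <= n)%nat -> Cmod (m j) <= E) ->
  Series (fun k => rpow (Cmod (Tlam m x k)) p)
    <= rpow E p * Series (fun k => rpow (Cmod (x k)) p)
       + rpow B p * Series (fun k => rpow (Cmod (x (S n + k)%nat)) p).
Proof.
  intros Hp Hx HB HE. simpl in Hx.
  set (g := fun k => rpow (Cmod (x k)) p) in *.
  assert (Hg : forall k, 0 <= g k) by (intros; apply rpow_nonneg).
  assert (Hmx : ex_series (fun k => rpow (Cmod (Tlam m x k)) p)).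
  { apply (Tlam_inX (lp p)); simpl; auto. exists B; auto. }
  assert (Hterm : forall k, rpow (Cmod (Tlam m x k)) p = rpow (Cmod (m k)) p * g k).
  { intros k. unfold Tlam, g. rewrite Cmod_mult. apply rpow_mult; apply Cmod_ge_0. }
  rewrite (Series_incr_n _ (S n)) by (auto; lia). simpl pred.
  apply Rplus_le_compat.
  - apply Rle_trans with (sum_f_R0 (fun k => g k * rpow E p) n).
    + apply sum_Rle. intros j Hj. rewrite Hterm, Rmult_comm.
      apply Rmult_le_compat_l; [apply Hg|].
      apply rpow_le; [split; [apply Cmod_ge_0 | apply HE, Hj] | lra].
    + rewrite <- scal_sum. apply Rmult_le_compat_l; [apply rpow_nonneg|].
      apply sum_le_series; auto.
  - rewrite <- Series_scal_l. apply Series_le.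
    + intros k. split; [apply rpow_nonneg|]. rewrite Hterm.
      apply Rmult_le_compat_r; [apply Hg|].
      apply rpow_le; [split; [apply Cmod_ge_0 | apply HB] | lra].
    + apply (ex_series_scal_l (V := R_NormedModule)), (ex_series_incr_n g (S n)), Hx.
Qed.

Section Vanishing.

Variables (mu : nat -> seq) (e : nat -> R) (B : R).
Hypothesis e_lim : is_lim_seq e 0.
Hypothesis mu_bounded : forall n j, Cmod (mu n j) <= B.
Hypothesis mu_head : forall n j, (j <= n)%nat -> Cmod (mu n j) <= e n.

Let B_nonneg : 0 <= B.
Proof. eapply bounded_seq_nonneg, (mu_bounded 0%nat). Qed.

Let e_nonneg n : 0 <= e n.
Proof. eapply Rle_trans; [apply (Cmod_ge_0 (mu n 0%nat)) | apply mu_head; lia]. Qed.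

Lemma is_lim_seq_normX_Tlam_c0 x : inX c0 x -> is_lim_seq (fun n => normX c0 (Tlam (mu n) x)) 0.
Proof.
  intros Hx. apply is_lim_seq_spec. intros eps. pose proof (cond_pos eps) as Heps.
  set (nx := normX c0 x).
  assert (Hcoord : forall j, Cmod (x j) <= nx) by (intros j; apply coord_le_normX; simpl; auto).
  pose proof Hx as Hx0. simpl in Hx0. apply is_lim_seq_spec in Hx0.
  destruct (Hx0 (mkposreal (eps / (2 * (B + 1))) ltac:(apply Rdiv_lt_0_compat; lra)))
    as [N1 HN1]. simpl in HN1.
  assert (Hex : is_lim_seq (fun n => e n * nx) 0).
  { replace (Finite 0) with (Rbar_mult 0 nx) by (simpl; f_equal; ring).
    apply is_lim_seq_scal_r, e_lim. }
  apply is_lim_seq_spec in Hex.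
  destruct (Hex (mkposreal (eps / 2) ltac:(lra))) as [N2 HN2]. simpl in HN2.
  exists (max N1 N2). intros n Hn.
  assert (Hin : inX c0 (Tlam (mu n) x)) by (apply Tlam_inX; simpl; auto; exists B; auto).
  rewrite Rminus_0_r, Rabs_pos_eq by (apply normX_nonneg; simpl; auto).
  apply Rle_lt_trans with (eps / 2); [|lra].
  simpl. apply sup_le; [exists (Cmod (Tlam (mu n) x 0%nat)), 0%nat; reflexivity|].
  intros r [j ->]. unfold Tlam. rewrite Cmod_mult.
  pose proof (Cmod_ge_0 (mu n j)). pose proof (Cmod_ge_0 (x j)).
  destruct (le_lt_dec j n) as [Hjn|Hnj].
  - specialize (HN2 n ltac:(lia)). rewrite Rminus_0_r in HN2.
    apply Rabs_lt_between in HN2.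
    assert (Cmod (mu n j) * Cmod (x j) <= e n * nx).
    { apply Rmult_le_compat; auto. }
    lra.
  - specialize (HN1 j ltac:(lia)). rewrite Rminus_0_r, Rabs_pos_eq in HN1 by lra.
    assert (Cmod (mu n j) * Cmod (x j) <= B * (eps / (2 * (B + 1)))).
    { apply Rmult_le_compat; auto. lra. }
    assert (B * (eps / (2 * (B + 1))) <= eps / 2).
    { apply Rmult_le_reg_r with (2 * (B + 1)); [lra|].
      field_simplify; [nra | lra]. }
    lra.
Qed.

Lemma is_lim_seq_normX_Tlam_lp p x : 1 <= p -> inX (lp p) x ->
  is_lim_seq (fun n => normX (lp p) (Tlam (mu n) x)) 0.
Proof.
  intros Hp Hx. simpl.
  set (g := fun k => rpow (Cmod (x k)) p).
  apply is_lim_seq_rpow_0; [unfold Rdiv; rewrite Rmult_1_l; apply Rinv_0_lt_compat; lra|].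
  apply is_lim_seq_le_le with (fun _ => 0)
    (fun n => rpow (e n) p * Series g + rpow B p * Series (fun k => g (S n + k)%nat)).
  - intros n. split.
    + apply series_nonneg; [intros; apply rpow_nonneg|].
      apply (Tlam_inX (lp p)); simpl; auto. exists B; auto.
    + apply Series_rpow_Tlam_le; auto.
  - apply is_lim_seq_const.
  - replace (Finite 0) with (Finite (0 + 0)) by (f_equal; ring).
    apply is_lim_seq_plus'.
    + replace (Finite 0) with (Rbar_mult 0 (Series g)) by (simpl; f_equal; ring).
      apply is_lim_seq_scal_r, is_lim_seq_rpow_0; auto; lra.
    + replace (Finite 0) with (Rbar_mult (rpow B p) 0) by (simpl; f_equal; ring).
      apply is_lim_seq_scal_l, is_lim_seq_Series_tail, Hx.
Qed.

Lemma is_lim_seq_normX_Tlam X x : valid_space X -> inX X x ->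
  is_lim_seq (fun n => normX X (Tlam (mu n) x)) 0.
Proof.
  destruct X as [|p]; simpl; intros HX Hx.
  - apply is_lim_seq_normX_Tlam_c0, Hx.
  - apply is_lim_seq_normX_Tlam_lp; assumption.
Qed.

End Vanishing.

(** * Simultaneous Dirichlet approximation *)

Definition infinitely_many (S : nat -> Prop) : Prop := forall N, exists k, (N <= k)%nat /\ S k.

Lemma infinite_pigeonhole M (f : nat -> nat) S : infinitely_many S -> (forall k, S k -> (f k < M)%nat) ->
  exists v, infinitely_many (fun k => S k /\ f k = v).
Proof.
  revert S. induction M as [|M IH]; intros S HS Hf.
  - destruct (HS 0%nat) as [k [_ Hk]]. specialize (Hf k Hk). lia.
  - destruct (classic (infinitely_many (fun k => S k /\ f k = M))) as [HM|HM]; [exists M; exact HM|].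
    apply not_all_ex_not in HM. destruct HM as [N0 HN0].
    destruct (IH (fun k => S k /\ (N0 <= k)%nat)) as [v Hv].
    + intros N. destruct (HS (max N N0)) as [k [Hk1 Hk2]]. exists k. repeat split; auto; lia.
    + intros k [Hk HNk]. specialize (Hf k Hk).
      assert (f k <> M) by (intros E; apply HN0; exists k; auto). lia.
    + exists v. intros N. destruct (Hv N) as [k [HNk [[Hk _] Hfk]]]. exists k; auto.
Qed.

Lemma infinite_pigeonhole_family n M (g : nat -> nat -> nat) S0 : infinitely_many S0 ->
  (forall i k, (g i k < M)%nat) ->
  exists S, infinitely_many S /\ (forall k, S k -> S0 k) /\
    forall i a b, (i < n)%nat -> S a -> S b -> g i a = g i b.
Proof.
  intros H0 Hg. induction n as [|n IH].
  - exists S0. repeat split; auto. intros; lia.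
  - destruct IH as [S1 [H1 [H10 H1g]]].
    destruct (infinite_pigeonhole M (g n) S1 H1) as [v Hv]; [intros; apply Hg|].
    exists (fun k => S1 k /\ g n k = v). repeat split; auto.
    + intros k [Hk _]. auto.
    + intros i a b Hi [Ha Hav] [Hb Hbv]. destruct (Nat.eq_dec i n) as [->|Hin]; [congruence|].
      apply H1g; auto; lia.
Qed.

(* [bucket M t] is the index of the interval of length [1/M] containing [t >= -1]. *)
Definition bucket (M : nat) (t : R) : nat := Z.to_nat (up (INR M * (t + 1))).

Lemma bucket_bound M t : -1 <= t <= 1 -> (bucket M t < 2 * M + 2)%nat.
Proof.
  intros Ht. unfold bucket. set (r := INR M * (t + 1)).
  assert (Hr : 0 <= r <= 2 * INR M) by (pose proof (pos_INR M); unfold r; split; nra).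
  destruct (archimed r) as [Hup1 Hup2].
  assert (Hz : (0 <= up r)%Z) by (apply le_IZR; lra).
  apply INR_lt. rewrite INR_IZR_INZ, Z2Nat.id by exact Hz.
  rewrite plus_INR, mult_INR. simpl. lra.
Qed.

Lemma bucket_eq M t t' : -1 <= t -> -1 <= t' -> bucket M t = bucket M t' ->
  Rabs (INR M * t - INR M * t') < 1.
Proof.
  intros Ht Ht' E. unfold bucket in E. pose proof (pos_INR M).
  set (r := INR M * (t + 1)) in *. set (r' := INR M * (t' + 1)) in *.
  destruct (archimed r) as [Hr1 Hr2]. destruct (archimed r') as [Hr1' Hr2'].
  assert (Hz : (0 <= up r)%Z) by (apply le_IZR; unfold r in *; nra).
  assert (Hz' : (0 <= up r')%Z) by (apply le_IZR; unfold r' in *; nra).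
  apply Z2Nat.inj in E; auto. rewrite E in Hr1, Hr2.
  replace (INR M * t - INR M * t') with (r - r') by (unfold r, r'; ring).
  apply Rabs_def1; lra.
Qed.

Lemma unit_coords (z : C) : Cmod z = 1 -> -1 <= fst z <= 1 /\ -1 <= snd z <= 1.
Proof.
  intros Hz. pose proof (Rmax_Cmod z) as Hmax. rewrite Hz in Hmax.
  assert (Hre : Rabs (fst z) <= 1) by (eapply Rle_trans; [apply Rmax_l | exact Hmax]).
  assert (Him : Rabs (snd z) <= 1) by (eapply Rle_trans; [apply Rmax_r | exact Hmax]).
  apply Rabs_le_between in Hre, Him. lra.
Qed.

Lemma Cmod_lt_of_coords (d : C) eps : Rabs (fst d) < eps -> Rabs (snd d) < eps -> Cmod d < 2 * eps.
Proof.
  intros Hre Him. eapply Rle_lt_trans; [apply Cmod_2Rmax|].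
  assert (Hs : sqrt 2 < 2).
  { rewrite <- (sqrt_square 2) at 2 by lra. apply sqrt_lt_1; lra. }
  assert (Hm : Rmax (Rabs (fst d)) (Rabs (snd d)) < eps) by (apply Rmax_lub_lt; auto).
  pose proof (Rmax_l (Rabs (fst d)) (Rabs (snd d))). pose proof (Rabs_pos (fst d)).
  pose proof (sqrt_pos 2). nra.
Qed.

Lemma Cmod_sub_lt_of_buckets M (z w : C) : (0 < M)%nat -> Cmod z = 1 -> Cmod w = 1 ->
  bucket M (fst z) = bucket M (fst w) -> bucket M (snd z) = bucket M (snd w) ->
  Cmod (z - w)%C < 2 / INR M.
Proof.
  intros HM Hz Hw Hre Him. assert (HMpos : 0 < INR M) by (apply lt_0_INR, HM).
  destruct (unit_coords z Hz) as [Hz1 Hz2], (unit_coords w Hw) as [Hw1 Hw2].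
  apply bucket_eq in Hre, Him; try lra.
  rewrite <- Rmult_minus_distr_l, Rabs_mult, Rabs_pos_eq in Hre, Him by lra.
  unfold Rdiv. apply Cmod_lt_of_coords; simpl.
  - apply Rmult_lt_reg_l with (INR M); auto. rewrite Rinv_r by lra.
    replace (fst z + - fst w) with (fst z - fst w) by ring. exact Hre.
  - apply Rmult_lt_reg_l with (INR M); auto. rewrite Rinv_r by lra.
    replace (snd z + - snd w) with (snd z - snd w) by ring. exact Him.
Qed.

Lemma Cmod_pow_unit (z : C) n : Cmod z = 1 -> Cmod (z ^ n)%C = 1.
Proof. intros Hz. rewrite Cmod_pow, Hz. apply pow1. Qed.

Lemma simultaneous_dirichlet (lam : seq) n eps K : 0 < eps -> (forall k, Cmod (lam k) = 1) ->
  exists k, (K <= k)%nat /\ forall j, (j < n)%nat -> Cmod (lam j ^ k - 1)%C < eps.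
Proof.
  intros Heps Hu.
  destruct (archimed_cor1 (eps / 2)) as [M [HM HMpos]]; [lra|].
  assert (Hbound : forall (f : C -> R), (forall z, Cmod z = 1 -> -1 <= f z <= 1) ->
                   forall i k, (bucket M (f (lam i ^ k)%C) < 2 * M + 2)%nat).
  { intros f Hf i k. apply bucket_bound, Hf, Cmod_pow_unit, Hu. }
  destruct (infinite_pigeonhole_family n (2 * M + 2) (fun i k => bucket M (fst (lam i ^ k)%C))
              (fun _ => True)) as [S1 [HS1 [_ HS1b]]];
    [intros N; exists N; auto | apply Hbound; apply unit_coords |].
  destruct (infinite_pigeonhole_family n (2 * M + 2) (fun i k => bucket M (snd (lam i ^ k)%C)) S1)
    as [S2 [HS2 [HS21 HS2b]]]; [exact HS1 | apply Hbound; apply unit_coords |].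
  destruct (HS2 0%nat) as [a [_ Ha]]. destruct (HS2 (a + K)%nat) as [b [Hab Hb]].
  exists (b - a)%nat. split; [lia|]. intros j Hj.
  assert (Hdiff : (lam j ^ b - lam j ^ a)%C = (lam j ^ a * (lam j ^ (b - a) - 1))%C).
  { replace b with (a + (b - a))%nat at 1 by lia. rewrite Cpow_add_r. ring. }
  replace (Cmod (lam j ^ (b - a) - 1)%C) with (Cmod (lam j ^ b - lam j ^ a)%C)
    by (rewrite Hdiff, Cmod_mult, Cmod_pow_unit by apply Hu; ring).
  apply Rlt_le_trans with (2 / INR M); [|unfold Rdiv; lra].
  apply (Cmod_sub_lt_of_buckets M); try apply Cmod_pow_unit, Hu; auto.
Qed.

(** * Recurrence and rigidity *)

Lemma incr_pos_ge ks : incr_pos ks -> forall n, (n < ks n)%nat.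
Proof. intros [H0 HS] n. induction n as [|n IH]; [exact H0 | specialize (HS n); lia]. Qed.

Lemma incr_pos_choice (P : nat -> nat -> Prop) :
  (forall n N, exists k, (N <= k)%nat /\ P n k) -> exists ks, incr_pos ks /\ forall n, P n (ks n).
Proof.
  intros HP.
  assert (f : forall n N, {k | (N <= k)%nat /\ P n k})
    by (intros n N; apply constructive_indefinite_description, HP).
  pose (ks := fix ks n := match n with
                         | O => proj1_sig (f O 1%nat)
                         | S m => proj1_sig (f (S m) (S (ks m)))
                         end).
  assert (Hks : forall n, (match n with O => 1 | S m => S (ks m) end <= ks n)%nat /\ P n (ks n))
    by (intros [|n]; apply proj2_sig).
  exists ks. repeat split.
  - apply (Hks O).
  - intros n. apply (Hks (S n)).
  - intros n. apply Hks.
Qed.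

Lemma Cmod_pow_sub_one_le2 lam n k : (forall j, Cmod (lam j) = 1) -> Cmod (pow_sub_one lam n k) <= 2.
Proof.
  intros Hu. unfold pow_sub_one. eapply Rle_trans; [apply Cmod_sub_le|].
  rewrite Cmod_pow_unit, Cmod_1 by apply Hu. lra.
Qed.

Lemma unimodular_rigid X lam : valid_space X -> (forall k, Cmod (lam k) = 1) -> rigid X lam.
Proof.
  intros HX Hu.
  destruct (incr_pos_choice
              (fun n k => forall j, (j <= n)%nat -> Cmod (pow_sub_one lam k j) < / INR (S n)))
    as [ks [Hks Happrox]].
  { intros n N. destruct (simultaneous_dirichlet lam (S n) (/ INR (S n)) N (inv_S_pos n) Hu)
      as [k [HNk Hk]].
    exists k. split; [exact HNk|]. intros j Hj. apply Hk. lia. }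
  exists ks. split; [exact Hks|]. intros x Hx.
  apply (is_lim_seq_ext (fun n => normX X (Tlam (pow_sub_one lam (ks n)) x))).
  { intros n. rewrite Tpow_sub_id. reflexivity. }
  apply (is_lim_seq_normX_Tlam _ (fun n => / INR (S n)) 2); auto.
  - apply is_lim_seq_inv_S.
  - intros n j. apply Cmod_pow_sub_one_le2, Hu.
  - intros n j Hj. left. apply Happrox, Hj.
Qed.

Lemma rigid_recurrent X lam : valid_space X -> bounded_seq lam -> rigid X lam -> recurrent X lam.
Proof.
  intros HX Hlam [ks [Hks Hlim]] U HU [x [Hx HUx]].
  destruct (HU x Hx HUx) as [eps [Heps HUeps]].
  specialize (Hlim x Hx). apply is_lim_seq_spec in Hlim.
  destruct (Hlim (mkposreal eps Heps)) as [N HN]. specialize (HN N (le_n N)). simpl in HN.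
  exists (ks N). split; [pose proof (incr_pos_ge ks Hks N); lia|].
  exists x. repeat split; auto. apply HUeps; [apply Tpow_inX; auto|].
  rewrite Rminus_0_r in HN. eapply Rle_lt_trans; [apply Rle_abs | exact HN].
Qed.

Lemma Cmod_eq_1_of_returns (z : C) :
  (forall d, 0 < d -> exists k c, (0 < k)%nat /\ Cmod (c - 1)%C < d /\ Cmod (z ^ k * c - 1)%C < d) ->
  Cmod z = 1.
Proof.
  intros Hret. apply NNPP. intros Hz.
  set (delta := Rabs (Cmod z - 1)).
  assert (Hdelta : 0 < delta) by (apply Rabs_pos_lt; lra).
  destruct (Hret (Rmin (1 / 2) (delta / 4))) as [k [c [Hk [Hc Hzc]]]].
  { apply Rmin_pos; lra. }
  pose proof (Rmin_l (1 / 2) (delta / 4)) as Hd1. pose proof (Rmin_r (1 / 2) (delta / 4)) as Hd2.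
  (* [c (z^k - 1)] is the difference of two numbers close to 0, while [|c|] is close to 1 *)
  assert (Hprod : Cmod (z ^ k - 1)%C * Cmod c < 2 * Rmin (1 / 2) (delta / 4)).
  { rewrite <- Cmod_mult. replace ((z ^ k - 1) * c)%C with ((z ^ k * c - 1) - (c - 1))%C by ring.
    eapply Rle_lt_trans; [apply Cmod_sub_le | lra]. }
  assert (Hc1 : 1 / 2 <= Cmod c).
  { pose proof (Cmod_rev c 1) as Hrev. rewrite Cmod_1 in Hrev.
    apply Rabs_le_between in Hrev. lra. }
  assert (Hpow : delta <= Cmod (z ^ k - 1)%C) by (apply Cmod_pow_sub1_ge, Hk).
  nra.
Qed.

Lemma recurrent_returns X lam j : valid_space X -> recurrent X lam ->
  forall d, 0 < d -> exists k c, (0 < k)%nat /\ Cmod (c - 1)%C < d /\ Cmod (lam j ^ k * c - 1)%C < d.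
Proof.
  intros HX Hrec d Hd.
  destruct (Hrec (fun y => Cmod (y j - 1)%C < d)) as [k [Hk [y [Hy [Hyj HTyj]]]]].
  - intros x Hx Hxj. exists (d - Cmod (x j - 1)%C). split; [lra|].
    intros y Hy Hyx.
    assert (Hcoord : Cmod (y j - x j)%C <= normX X (seq_sub y x))
      by (apply (coord_le_normX X (seq_sub y x) j); auto; apply inX_sub; auto).
    assert (Htri : Cmod (y j - 1)%C <= Cmod (y j - x j)%C + Cmod (x j - 1)%C).
    { replace (y j - 1)%C with ((y j - x j) + (x j - 1))%C by ring. apply Cmod_triangle. }
    lra.
  - exists (unit_seq j). split; [apply unit_seq_inX, HX|].
    rewrite unit_seq_diag. replace (RtoC 1 - 1)%C with (RtoC 0) by ring. rewrite Cmod_0. exact Hd.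
  - exists k, (y j). repeat split; auto. rewrite Tpow_Tlam in HTyj. exact HTyj.
Qed.

Lemma recurrent_unimodular X lam : valid_space X -> recurrent X lam -> forall j, Cmod (lam j) = 1.
Proof. intros HX Hrec j. apply Cmod_eq_1_of_returns, (recurrent_returns X); assumption. Qed.

(** * Uniform rigidity *)

Lemma opnorm_Tpow_sub_id X lam n : valid_space X -> bounded_seq lam ->
  opnorm X (fun x => seq_sub (Tpow lam n x) x) = supnorm (pow_sub_one lam n).
Proof.
  intros HX Hlam.
  replace (fun x => seq_sub (Tpow lam n x) x) with (Tlam (pow_sub_one lam n))
    by (apply functional_extensionality; intros x; symmetry; apply Tpow_sub_id).
  apply opnorm_Tlam, bounded_pow_sub_one; assumption.
Qed.

Lemma unif_rigid_iff X lam : valid_space X -> bounded_seq lam ->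
  unif_rigid X lam <->
  exists ks, incr_pos ks /\ is_lim_seq (fun n => supnorm (pow_sub_one lam (ks n))) 0.
Proof.
  intros HX Hlam. unfold unif_rigid.
  split; intros [ks [Hks Hlim]]; exists ks; split; auto;
    (eapply is_lim_seq_ext; [|exact Hlim]); intros n; simpl;
    rewrite opnorm_Tpow_sub_id; auto.
Qed.

Lemma unif_rigid_unimodular X lam : valid_space X -> bounded_seq lam -> unif_rigid X lam ->
  forall j, Cmod (lam j) = 1.
Proof.
  intros HX Hlam Hur j. apply (unif_rigid_iff X lam HX Hlam) in Hur.
  destruct Hur as [ks [Hks Hlim]].
  assert (Hle : forall n, Rabs (Cmod (lam j) - 1) <= supnorm (pow_sub_one lam (ks n))).
  { intros n. apply Rle_trans with (Cmod (pow_sub_one lam (ks n) j)).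
    - apply Cmod_pow_sub1_ge. pose proof (incr_pos_ge ks Hks n). lia.
    - apply le_supnorm, bounded_pow_sub_one, Hlam. }
  pose proof (is_lim_seq_le _ _ _ _ Hle (is_lim_seq_const _) Hlim) as Hzero. simpl in Hzero.
  pose proof (Rabs_pos (Cmod (lam j) - 1)).
  apply Rminus_diag_uniq, Rabs_eq_0. lra.
Qed.

Lemma LimInf_seq_eq_0_iff (u : nat -> R) : (forall n, 0 <= u n) ->
  LimInf_seq u = 0 <-> exists ks, incr_pos ks /\ is_lim_seq (fun n => u (ks n)) 0.
Proof.
  intros Hu. split.
  - intros Hinf.
    assert (Hlinf : is_LimInf_seq u 0) by (rewrite <- Hinf; unfold LimInf_seq; apply proj2_sig).
    destruct (incr_pos_choice (fun n k => u k < / INR (S n))) as [ks [Hks Hsmall]].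
    { intros n N. destruct (Hlinf (mkposreal _ (inv_S_pos n))) as [Hoften _].
      destruct (Hoften N) as [k [HNk Hk]]. exists k. cbn [pos] in Hk. split; [exact HNk | lra]. }
    exists ks. split; [exact Hks|].
    apply is_lim_seq_le_le with (fun _ => 0) (fun n => / INR (S n)).
    + intros n. split; [apply Hu | left; apply Hsmall].
    + apply is_lim_seq_const.
    + apply is_lim_seq_inv_S.
  - intros [ks [Hks Hlim]]. apply is_LimInf_seq_unique. intros eps.
    pose proof (cond_pos eps) as Heps. split.
    + intros N. apply is_lim_seq_spec in Hlim. destruct (Hlim eps) as [M HM].
      exists (ks (max N M)). split; [pose proof (incr_pos_ge ks Hks (max N M)); lia|].
      specialize (HM (max N M) ltac:(lia)). apply Rabs_lt_between in HM. lra.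
    + exists 0%nat. intros n _. specialize (Hu n). lra.
Qed.

Lemma cexp_i_plus a b : cexp_i (a + b) = (cexp_i a * cexp_i b)%C.
Proof. unfold cexp_i, Cmult. simpl. rewrite cos_plus, sin_plus. f_equal; ring. Qed.

Lemma cexp_i_mult_INR n t : cexp_i (INR n * t) = (cexp_i t ^ n)%C.
Proof.
  induction n as [|n IH].
  - simpl. unfold cexp_i. rewrite Rmult_0_l, cos_0, sin_0. reflexivity.
  - rewrite S_INR. replace ((INR n + 1) * t) with (t + INR n * t) by ring.
    rewrite cexp_i_plus, IH. reflexivity.
Qed.

Lemma unimodular_angle (z : C) : Cmod z = 1 -> exists t, z = cexp_i (2 * PI * t).
Proof.
  intros Hz. destruct z as [a b]. unfold Cmod in Hz; simpl in Hz.
  assert (Hab : a * (a * 1) + b * (b * 1) = 1).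
  { rewrite <- (sqrt_sqrt (a * (a * 1) + b * (b * 1))) by nra. rewrite Hz. ring. }
  assert (Ha : -1 <= a <= 1) by nra.
  assert (Hb : sqrt (1 - a²) = Rabs b).
  { rewrite <- sqrt_Rsqr_abs. f_equal. unfold Rsqr. nra. }
  pose proof PI_RGT_0.
  destruct (Rle_dec 0 b).
  - exists (acos a / (2 * PI)). unfold cexp_i.
    replace (2 * PI * (acos a / (2 * PI))) with (acos a) by (field; lra).
    rewrite cos_acos, sin_acos, Hb, Rabs_pos_eq by auto. reflexivity.
  - exists (- acos a / (2 * PI)). unfold cexp_i.
    replace (2 * PI * (- acos a / (2 * PI))) with (- acos a) by (field; lra).
    rewrite cos_neg, sin_neg, cos_acos, sin_acos, Hb, Rabs_left by (auto || lra).
    f_equal. ring.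
Qed.

Lemma sup_cexp_i_eq_supnorm lam theta : (forall k, lam k = cexp_i (2 * PI * theta k)) ->
  (fun n : nat => sup (fun r => exists k, r = Cmod (Cminus (cexp_i (2 * PI * INR n * theta k)) (RtoC 1))))
  = (fun n => supnorm (pow_sub_one lam n)).
Proof.
  intros Htheta. apply functional_extensionality. intros n. unfold supnorm.
  replace (pow_sub_one lam n) with (fun k => Cminus (cexp_i (2 * PI * INR n * theta k)) (RtoC 1)).
  - reflexivity.
  - apply functional_extensionality. intros k. unfold pow_sub_one.
    rewrite Htheta, <- cexp_i_mult_INR. do 2 f_equal. ring.
Qed.

Theorem theorem5p4 (X : seqspace) (HX : valid_space X)
  (lam : nat -> C) (Hlam : bounded_seq lam) :
  ((recurrent X lam <-> rigid X lam) /\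
   (rigid X lam <-> forall k, Cmod (lam k) = 1)) /\
  (unif_rigid X lam <->
   exists theta : nat -> R,
     (forall k, lam k = cexp_i (2 * PI * theta k)) /\
     LimInf_seq (fun n : nat =>
        sup (fun r => exists k, r = Cmod (Cminus (cexp_i (2 * PI * INR n * theta k)) (RtoC 1))))
       = Finite 0).
Proof.
  pose proof (recurrent_unimodular X lam HX) as Hrec_unim.
  pose proof (unimodular_rigid X lam HX) as Hunim_rig.
  pose proof (rigid_recurrent X lam HX Hlam) as Hrig_rec.
  split; [split; split; auto|].
  pose proof (unif_rigid_unimodular X lam HX Hlam) as Hur_unim.
  assert (Hnonneg : forall n, 0 <= supnorm (pow_sub_one lam n))
    by (intros n; apply supnorm_nonneg, bounded_pow_sub_one, Hlam).
  split.
  - intros Hur.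
    assert (Hangle : forall k, {t | lam k = cexp_i (2 * PI * t)})
      by (intros k; apply constructive_indefinite_description, unimodular_angle, Hur_unim, Hur).
    exists (fun k => proj1_sig (Hangle k)).
    assert (Htheta : forall k, lam k = cexp_i (2 * PI * proj1_sig (Hangle k)))
      by (intros k; apply proj2_sig).
    split; [exact Htheta|].
    rewrite (sup_cexp_i_eq_supnorm lam _ Htheta), LimInf_seq_eq_0_iff by exact Hnonneg.
    apply (unif_rigid_iff X); assumption.
  - intros [theta [Htheta Hinf]].
    rewrite (sup_cexp_i_eq_supnorm lam _ Htheta), LimInf_seq_eq_0_iff in Hinf by exact Hnonneg.
    apply (unif_rigid_iff X); assumption.
Qed.
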